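(* Let $\Bbbk$ be a commutative ring, let $A$ be a flat noetherian $\Bbbk$-algebra, and let $\mathfrak a\subseteq A$ be an ideal. Let $I:=\mathfrak a\otimes_\Bbbk A+A\otimes_\Bbbk\mathfrak a\subseteq A\otimes_\Bbbk A$, let $\widehat A=\Lambda_{\mathfrak a}(A)$ with completion map $\tau_A:A\to\widehat A$, let $\widehat{\mathfrak a}:=\mathfrak a\widehat A$, and let $J:=\widehat{\mathfrak a}\otimes_\Bbbk\widehat A+\widehat A\otimes_\Bbbk\widehat{\mathfrak a}=I\cdot(\widehat A\otimes_\Bbbk\widehat A)\subseteq\widehat A\otimes_\Bbbk\widehat A$. Then the induced ring homomorphism \[ \Lambda_I(\tau_A\otimes_\Bbbk\tau_A):\Lambda_I(A\otimes_\Bbbk A)\to\Lambda_J(\widehat A\otimes_\Bbbk\widehat A) \] is an isomorphism.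
   Context: All rings are commutative and unital. For an ideal $\mathfrak c$ of a ring $R$ and an $R$-module $M$, $\Lambda_{\mathfrak c}(M)=\varprojlim_n R/\mathfrak c^n\otimes_RM$. $I$ denotes the ideal generated by $\mathfrak a\otimes1$ and $1\otimes\mathfrak a$, similarly for $J$. *)

From HB Require Import structures.
From mathcomp Require Import all_boot all_order all_algebra.
Set Implicit Arguments. Unset Strict Implicit. Unset Printing Implicit Defensive.
Import GRing.Theory.
Local Open Scope ring_scope.

Definition is_ideal (T : comPzRingType) (S : T -> Prop) : Prop :=
  S 0 /\ (forall x y, S x -> S y -> S (x + y)) /\ (forall r x, S x -> S (r * x)).

Definition gen_ideal (T : comPzRingType) (S : T -> Prop) : T -> Prop :=
  fun x => exists s : seq (T * T),
    (forall p, p \in s -> S p.2) /\ x = \sum_(p <- s) p.1 * p.2.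

Fixpoint idpow (T : comPzRingType) (I : T -> Prop) (n : nat) : T -> Prop :=
  match n with
  | 0 => fun _ => True
  | n'.+1 => gen_ideal (fun z => exists x y, idpow I n' x /\ I y /\ z = x * y)
  end.

Definition noetherian (T : comPzRingType) : Prop :=
  forall F : nat -> T -> Prop, (forall n, is_ideal (F n)) ->
    (forall n x, F n x -> F n.+1 x) ->
    exists N, forall n, (N <= n)%N -> forall x, F n x -> F N x.

Definition klin (k : pzRingType) (M N : lmodType k) (f : M -> N) : Prop :=
  forall r x y, f (r *: x + y) = r *: f x + f y.

Definition kbilin (k A : comPzRingType) (iota : k -> A) (M T : lmodType k)
  (b : M -> A -> T) : Prop :=
  (forall m m' a, b (m + m') a = b m a + b m' a) /\
  (forall m a a', b m (a + a') = b m a + b m a') /\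
  (forall r m a, b (r *: m) a = r *: b m a) /\
  (forall r m a, b m (iota r * a) = r *: b m a).

Definition is_tensor (k A : comPzRingType) (iota : k -> A) (M T : lmodType k)
  (b : M -> A -> T) : Prop :=
  kbilin iota b /\
  forall (Q : lmodType k) (g : M -> A -> Q), kbilin iota g ->
    exists h : T -> Q, klin h /\ (forall m a, h (b m a) = g m a) /\
      forall h' : T -> Q, klin h' -> (forall m a, h' (b m a) = g m a) ->
        forall t, h' t = h t.

Definition flat (k A : comPzRingType) (iota : k -> A) : Prop :=
  forall (M N : lmodType k) (u : M -> N), klin u -> injective u ->
  forall (TM TN : lmodType k) (bM : M -> A -> TM) (bN : N -> A -> TN),
    is_tensor iota bM -> is_tensor iota bN ->
    forall h : TM -> TN, klin h -> (forall m a, h (bM m a) = bN (u m) a) ->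
      injective h.

(* (P, j1, j2) is the tensor product B (x)_k C of commutative k-algebras
   (k-algebra structures given by iB, iC), i.e. the pushout of commutative
   rings / coproduct of commutative k-algebras. *)
Definition is_tensor_alg (k B C P : comPzRingType) (iB : k -> B) (iC : k -> C)
  (j1 : {rmorphism B -> P}) (j2 : {rmorphism C -> P}) : Prop :=
  (forall r, j1 (iB r) = j2 (iC r)) /\
  forall (Q : comPzRingType) (f : {rmorphism B -> Q}) (g : {rmorphism C -> Q}),
    (forall r, f (iB r) = g (iC r)) ->
    exists h : {rmorphism P -> Q},
      (forall b, h (j1 b) = f b) /\ (forall c, h (j2 c) = g c) /\
      forall h' : {rmorphism P -> Q},
        (forall b, h' (j1 b) = f b) -> (forall c, h' (j2 c) = g c) ->
        forall x, h' x = h x.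

(* Elements of Lambda_I(T) = lim_n T/I^n T are represented by compatible
   sequences c (c (n+1) = c n mod I^n), modulo the relation c ~ d iff
   c n = d n mod I^n for all n. *)
Definition compat (T : comPzRingType) (I : T -> Prop) (c : nat -> T) : Prop :=
  forall n, idpow I n (c n.+1 - c n).

Definition lim_eq (T : comPzRingType) (I : T -> Prop) (c d : nat -> T) : Prop :=
  forall n, idpow I n (c n - d n).

(* (Ahat, tau) is the a-adic completion Lambda_a(A) with its completion map:
   there is a ring isomorphism phi : Ahat -> lim_n A/a^n such that
   phi o tau is the canonical map A -> lim_n A/a^n. *)
Definition is_completion (A Ahat : comPzRingType) (a : A -> Prop)
  (tau : {rmorphism A -> Ahat}) : Prop :=
  exists phi : Ahat -> nat -> A,
    (forall y, compat a (phi y)) /\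
    (forall y y', lim_eq a (phi (y + y')) (fun n => phi y n + phi y' n)) /\
    (forall y y', lim_eq a (phi (y * y')) (fun n => phi y n * phi y' n)) /\
    lim_eq a (phi 1) (fun _ => 1) /\
    (forall y y', lim_eq a (phi y) (phi y') -> y = y') /\
    (forall c, compat a c -> exists y, lim_eq a (phi y) c) /\
    (forall x, lim_eq a (phi (tau x)) (fun _ => x)).

(* Lambda_I(h) : Lambda_I(T) -> Lambda_J(T'), [c] |-> [h o c], is bijective
   (equivalently, being a ring map, an isomorphism). *)
Definition lambda_iso (T T' : comPzRingType) (I : T -> Prop) (J : T' -> Prop)
  (h : T -> T') : Prop :=
  (forall c d, compat I c -> compat I d ->
     lim_eq J (fun n => h (c n)) (fun n => h (d n)) -> lim_eq I c d) /\
  (forall e, compat J e -> exists c, compat I c /\ lim_eq J (fun n => h (c n)) e).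

From HB Require Import structures.
From mathcomp Require Import all_boot all_order all_algebra.
From Stdlib Require Import Classical ClassicalEpsilon FunctionalExtensionality PropExtensionality.

(* For every n, h induces an isomorphism (A ⊗ A)/I^n ≅ (Â ⊗ Â)/J^n, and the
   theorem is the limit of these isomorphisms.  The inverse G comes from the
   universal property of Â ⊗ Â applied to the two maps Â → A/a^n → (A ⊗ A)/I^n;
   G ∘ h is the projection by the universal property of A ⊗ A, and h ∘ G is the
   projection because the kernel of Â → A/a^n is â^n.  This last fact is where
   A noetherian enters: if y maps to 0 in A/a^n, its coordinates in A/a^(m+n)
   can be written on finitely many generators g_i of a^n with coefficients
   forming compatible sequences, and their limits s_i give y = Σ s_i τ(g_i). *)

Set Implicit Arguments. Unset Strict Implicit. Unset Printing Implicit Defensive.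
Import GRing.Theory.
Local Open Scope ring_scope.

Section Ideals.
Variables (T : comPzRingType) (P : T -> Prop) (Pid : is_ideal P).

Lemma ideal0 : P 0. Proof. by case: Pid. Qed.
Lemma idealD x y : P x -> P y -> P (x + y). Proof. by case: Pid => _ [+ _]; apply. Qed.
Lemma idealMl r x : P x -> P (r * x). Proof. by case: Pid => _ [_]; apply. Qed.
Lemma idealMr r x : P x -> P (x * r). Proof. by rewrite mulrC; apply: idealMl. Qed.
Lemma idealN x : P x -> P (- x). Proof. by rewrite -mulN1r; apply: idealMl. Qed.

Lemma ideal_sum (I : Type) (s : seq I) (Q : pred I) (F : I -> T) :
  (forall i, Q i -> P (F i)) -> P (\sum_(i <- s | Q i) F i).
Proof. by apply: big_ind; [apply: ideal0 | apply: idealD]. Qed.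

Lemma ideal_congC x y : P (x - y) -> P (y - x).
Proof. by rewrite -opprB => /idealN; rewrite opprK. Qed.
Lemma ideal_congT x y z : P (x - y) -> P (y - z) -> P (x - z).
Proof. by move=> Pxy Pyz; rewrite -(subrK y x) -addrA; apply: idealD. Qed.
Lemma ideal_congD x y x' y' : P (x - x') -> P (y - y') -> P (x + y - (x' + y')).
Proof. by move=> Px Py; rewrite opprD addrACA; apply: idealD. Qed.
Lemma ideal_congM x y x' y' : P (x - x') -> P (y - y') -> P (x * y - x' * y').
Proof.
move=> Px Py; have -> : x * y - x' * y' = (x - x') * y + x' * (y - y').
  by rewrite mulrBl mulrBr addrA subrK.
by apply: idealD; [apply: idealMr | apply: idealMl].
Qed.

End Ideals.

Lemma preim_ideal (T T' : comPzRingType) (f : {rmorphism T -> T'}) (P : T' -> Prop) :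
  is_ideal P -> is_ideal (fun x => P (f x)).
Proof.
move=> Pid; split; first by rewrite rmorph0; apply: ideal0.
by split=> [x y|r x]; rewrite ?rmorphD ?rmorphM; [apply: idealD | apply: idealMl].
Qed.

Lemma image_ideal (T T' : comPzRingType) (f : {rmorphism T -> T'}) (P : T -> Prop) :
  (forall y, exists x, f x = y) -> is_ideal P ->
  is_ideal (fun y => exists x, P x /\ y = f x).
Proof.
move=> f_surj Pid; split; first by exists 0; rewrite rmorph0; split=> //; apply: ideal0.
split=> [_ _ [x [Px ->]] [x' [Px' ->]] | r _ [x [Px ->]]].
  by exists (x + x'); rewrite rmorphD; split=> //; apply: idealD.
have [r' <-] := f_surj r; exists (r' * x); rewrite rmorphM; split=> //.
exact: idealMl.
Qed.

Section GeneratedIdeals.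
Variable T : comPzRingType.
Implicit Types (S P : T -> Prop).

Lemma gen_ideal_ideal S : is_ideal (gen_ideal S).
Proof.
split; first by exists [::]; rewrite big_nil.
split=> [_ _ [s [Ss ->]] [s' [Ss' ->]] | r _ [s [Ss ->]]].
  exists (s ++ s'); rewrite big_cat; split=> // p.
  by rewrite mem_cat => /orP[]; [apply: Ss | apply: Ss'].
exists [seq (r * p.1, p.2) | p <- s]; split; first by move=> _ /mapP[p /Ss Sp ->].
by rewrite big_map mulr_sumr; apply: eq_bigr => p _; rewrite mulrA.
Qed.

Lemma gen_ideal_sub S x : S x -> gen_ideal S x.
Proof.
by move=> Sx; exists [:: (1, x)]; rewrite big_seq1 mul1r; split=> // p /[1!inE] /eqP->.
Qed.

Lemma gen_ideal_min S P : is_ideal P -> (forall x, S x -> P x) ->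
  forall x, gen_ideal S x -> P x.
Proof.
move=> Pid SP _ [s [Ss ->]]; rewrite big_seq; apply: ideal_sum => // p /Ss/SP.
exact: idealMl.
Qed.

Lemma idpow_ideal S n : is_ideal (idpow S n).
Proof. by case: n => [|n]; [split | apply: gen_ideal_ideal]. Qed.

Lemma idpow_mul S n x y : idpow S n x -> S y -> idpow S n.+1 (x * y).
Proof. by move=> Sx Sy; apply: gen_ideal_sub; exists x, y. Qed.

Lemma idpowS_sub S n x : idpow S n.+1 x -> idpow S n x.
Proof.
apply: gen_ideal_min; first exact: idpow_ideal.
by move=> _ [u [v [Su [_ ->]]]]; apply: idealMr => //; apply: idpow_ideal.
Qed.

Lemma idpow_le S m n x : (m <= n)%N -> idpow S n x -> idpow S m x.
Proof.
by move/subnKC <-; elim: (n - m)%N => [|k IH]; rewrite ?addn0 // addnS => /idpowS_sub.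
Qed.

Lemma compat_idpow_addn S c m k : compat S c -> idpow S m (c (m + k)%N - c m).
Proof.
move=> cS; elim: k => [|k IH]; first by rewrite addn0 subrr; apply: ideal0; apply: idpow_ideal.
rewrite addnS -(subrK (c (m + k)%N) (c _)) -addrA.
apply: idealD IH; first exact: idpow_ideal.
by apply: idpow_le (cS _); apply: leq_addr.
Qed.

End GeneratedIdeals.

Lemma idpow_rmorph (T T' : comPzRingType) (f : {rmorphism T -> T'})
    (S : T -> Prop) (S' : T' -> Prop) :
  (forall x, S x -> S' (f x)) -> forall n x, idpow S n x -> idpow S' n (f x).
Proof.
move=> SS'; elim=> [//|n IH] x /=.
apply: (gen_ideal_min (P := fun x => idpow S' n.+1 (f x))).
  exact/preim_ideal/idpow_ideal.
by move=> _ [u [v [Su [Sv ->]]]]; rewrite rmorphM; apply/idpow_mul/SS'/Sv; apply: IH.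
Qed.

Lemma idpow_image (R T Q : comPzRingType) (f : {rmorphism R -> Q})
    (pi : {rmorphism T -> Q}) (S : R -> Prop) (S' : T -> Prop) :
  (forall q, exists t, pi t = q) ->
  (forall z, S z -> exists w, S' w /\ f z = pi w) ->
  forall n z, idpow S n z -> exists w, idpow S' n w /\ f z = pi w.
Proof.
move=> pi_surj SS'; elim=> [|n IH] z /=.
  by have [w wE] := pi_surj (f z); exists w.
apply: (gen_ideal_min (P := fun z => exists w, idpow S' n.+1 w /\ f z = pi w)).
  exact: (preim_ideal f (image_ideal pi_surj (idpow_ideal S' n.+1))).
move=> _ [u [v [Su [Sv ->]]]].
have [[w [S'w fu]] [w' [S'w' fv]]] := (IH u Su, SS' v Sv).
by exists (w * w'); rewrite !rmorphM fu fv; split=> //; apply: idpow_mul.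
Qed.

(* MathComp's ring_quotient needs decidable proper ideals; the ideals here are
   predicates in Prop and include I^0 = T, so classes are represented by chosen
   canonical representatives instead. *)
Section Quotient.
Variables (T : comPzRingType) (P : T -> Prop).

Definition quot_rep (x : T) : T := epsilon (inhabits x) (fun z => P (x - z)).

(* The unused ideal proof makes the ring structure on [quot Pid] inferable. *)
Definition quot (_ : is_ideal P) := {x : T | quot_rep x == x}.

Variable Pid : is_ideal P.

Lemma quot_repP x : P (x - quot_rep x).
Proof.
apply: (epsilon_spec (inhabits x) (fun z => P (x - z))).
by exists x; rewrite subrr; apply: ideal0.
Qed.

Lemma quot_rep_eq x y : P (x - y) -> quot_rep x = quot_rep y.
Proof.
move=> Pxy; rewrite /quot_rep (proof_irrelevance _ (inhabits x) (inhabits y)).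
congr epsilon; apply: functional_extensionality => z.
by apply: propositional_extensionality; split; apply: ideal_congT => //; apply: ideal_congC.
Qed.

HB.instance Definition _ := Choice.on (quot Pid).

Definition mk (x : T) : quot Pid :=
  exist _ (quot_rep x) (introT eqP (quot_rep_eq (ideal_congC Pid (quot_repP x)))).

Lemma mkK (q : quot Pid) : mk (val q) = q.
Proof. by apply: val_inj; apply/eqP/(valP q). Qed.

Lemma mk_surj q : exists x, mk x = q.
Proof. by exists (val q); apply: mkK. Qed.

Lemma eq_mk x y : mk x = mk y <-> P (x - y).
Proof.
split=> [/(congr1 val) /= rep_xy | /quot_rep_eq rep_xy]; last exact: val_inj.
apply: (ideal_congT Pid (quot_repP x)); rewrite rep_xy.
exact/(ideal_congC Pid)/quot_repP.
Qed.

Lemma mk_val x : P (val (mk x) - x).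
Proof. exact/(ideal_congC Pid)/quot_repP. Qed.

Definition quot_add (q r : quot Pid) := mk (val q + val r).
Definition quot_opp (q : quot Pid) := mk (- val q).
Definition quot_mul (q r : quot Pid) := mk (val q * val r).

Lemma quot_addE x y : quot_add (mk x) (mk y) = mk (x + y).
Proof. by apply/eq_mk/(ideal_congD Pid); apply: mk_val. Qed.
Lemma quot_oppE x : quot_opp (mk x) = mk (- x).
Proof. by apply/eq_mk; rewrite -opprD; apply/(idealN Pid)/mk_val. Qed.
Lemma quot_mulE x y : quot_mul (mk x) (mk y) = mk (x * y).
Proof. by apply/eq_mk/(ideal_congM Pid); apply: mk_val. Qed.

Lemma quot_addA : associative quot_add.
Proof. by move=> q r s; rewrite -[q]mkK -[r]mkK -[s]mkK !quot_addE addrA. Qed.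
Lemma quot_addC : commutative quot_add.
Proof. by move=> q r; rewrite -[q]mkK -[r]mkK !quot_addE addrC. Qed.
Lemma quot_add0 : left_id (mk 0) quot_add.
Proof. by move=> q; rewrite -[q]mkK quot_addE add0r. Qed.
Lemma quot_addN : left_inverse (mk 0) quot_opp quot_add.
Proof. by move=> q; rewrite -[q]mkK quot_oppE quot_addE addNr. Qed.
HB.instance Definition _ :=
  GRing.isZmodule.Build (quot Pid) quot_addA quot_addC quot_add0 quot_addN.

Lemma quot_mulA : associative quot_mul.
Proof. by move=> q r s; rewrite -[q]mkK -[r]mkK -[s]mkK !quot_mulE mulrA. Qed.
Lemma quot_mulC : commutative quot_mul.
Proof. by move=> q r; rewrite -[q]mkK -[r]mkK !quot_mulE mulrC. Qed.
Lemma quot_mul1 : left_id (mk 1) quot_mul.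
Proof. by move=> q; rewrite -[q]mkK quot_mulE mul1r. Qed.
Lemma quot_mulDl : left_distributive quot_mul quot_add.
Proof.
by move=> q r s; rewrite -[q]mkK -[r]mkK -[s]mkK !(quot_addE, quot_mulE) mulrDl.
Qed.
HB.instance Definition _ :=
  GRing.Zmodule_isComPzRing.Build (quot Pid)
    quot_mulA quot_mulC quot_mul1 quot_mulDl.

Lemma mk_is_zmod_morphism : zmod_morphism mk.
Proof.
move=> x y; change (mk (x - y) = quot_add (mk x) (quot_opp (mk y))).
by rewrite quot_oppE quot_addE.
Qed.
Lemma mk_is_monoid_morphism : monoid_morphism mk.
Proof.
by split=> // x y; change (mk (x * y) = quot_mul (mk x) (mk y)); rewrite quot_mulE.
Qed.
HB.instance Definition _ := GRing.isZmodMorphism.Build T (quot Pid) mk mk_is_zmod_morphism.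
HB.instance Definition _ := GRing.isMonoidMorphism.Build T (quot Pid) mk mk_is_monoid_morphism.

Lemma mk_eq0 x : mk x = 0 <-> P x.
Proof. by rewrite -(rmorph0 mk) eq_mk subr0. Qed.

End Quotient.

Section QuotientLift.
Variables (R T : comPzRingType) (P : T -> Prop) (Pid : is_ideal P) (F : R -> T).
Hypotheses (FD : forall x y, P (F (x + y) - (F x + F y))) (F1 : P (F 1 - 1))
  (FM : forall x y, P (F (x * y) - F x * F y)).

Lemma quot_lift_is_nmod_morphism : nmod_morphism (fun x => mk Pid (F x)).
Proof.
have mkFD x y : mk Pid (F (x + y)) = mk Pid (F x) + mk Pid (F y).
  by rewrite -rmorphD; apply/eq_mk/FD.
split=> //; apply: (@addrI _ (mk Pid (F 0))).
by rewrite -mkFD addr0 addr0.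
Qed.

Lemma quot_lift_is_monoid_morphism : monoid_morphism (fun x => mk Pid (F x)).
Proof.
split; first by rewrite -(rmorph1 (mk Pid)); apply/eq_mk.
by move=> x y; rewrite -rmorphM; apply/eq_mk/FM.
Qed.

Definition quot_lift : {rmorphism R -> quot Pid} :=
  HB.pack (fun x => mk Pid (F x))
    (GRing.isNmodMorphism.Build _ _ _ quot_lift_is_nmod_morphism)
    (GRing.isMonoidMorphism.Build _ _ _ quot_lift_is_monoid_morphism).

Lemma quot_liftE x : quot_lift x = mk Pid (F x).
Proof. by []. Qed.

End QuotientLift.

Section QuotientMap.
Variables (T T' : comPzRingType) (P : T -> Prop) (P' : T' -> Prop).
Variables (Pid : is_ideal P) (P'id : is_ideal P') (f : {rmorphism T -> T'}).
Hypothesis fP : forall x, P x -> P' (f x).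

Let f_congr x y : P (x - y) -> P' (f x - f y).
Proof. by rewrite -rmorphB; apply: fP. Qed.

Let f_valD (q r : quot Pid) : P' (f (val (q + r)) - (f (val q) + f (val r))).
Proof. by rewrite -rmorphD; apply/f_congr/(mk_val Pid (val q + val r)). Qed.
Let f_val1 : P' (f (val (1 : quot Pid)) - 1).
Proof. by rewrite -(rmorph1 f); apply/f_congr/(mk_val Pid 1). Qed.
Let f_valM (q r : quot Pid) : P' (f (val (q * r)) - f (val q) * f (val r)).
Proof. by rewrite -rmorphM; apply/f_congr/(mk_val Pid (val q * val r)). Qed.

Definition quot_map : {rmorphism quot Pid -> quot P'id} :=
  quot_lift P'id f_valD f_val1 f_valM.

Lemma quot_mapE x : quot_map (mk Pid x) = mk P'id (f x).
Proof. by rewrite /quot_map quot_liftE; apply/eq_mk/f_congr; exact: mk_val. Qed.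

End QuotientMap.

Lemma tensor_alg_ext (k B C P Q : comPzRingType) (iB : k -> B) (iC : k -> C)
    (j1 : {rmorphism B -> P}) (j2 : {rmorphism C -> P}) (u v : {rmorphism P -> Q}) :
  is_tensor_alg iB iC j1 j2 ->
  (forall b, u (j1 b) = v (j1 b)) -> (forall c, u (j2 c) = v (j2 c)) -> u =1 v.
Proof.
move=> [j12 univ] uv1 uv2 x.
have u12 r : (u \o j1) (iB r) = (u \o j2) (iC r) by rewrite /= j12.
have [w [_ [_ w_uniq]]] := univ Q (u \o j1) (u \o j2) u12.
by rewrite (w_uniq u) // (w_uniq v) // => [b | c] /=; rewrite ?uv1 ?uv2.
Qed.

Section Noetherian.
Variable T : comPzRingType.

Definition span (C : T -> Prop) (g : nat -> T) (r : nat) (x : T) :=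
  exists t : nat -> T, (forall i, C (t i)) /\ x = \sum_(i < r) t i * g i.

Lemma span_ideal C g r : is_ideal C -> is_ideal (span C g r).
Proof.
move=> Cid; split.
  by exists (fun=> 0); split=> [i|]; [apply: ideal0 | rewrite big1 // => i _; rewrite mul0r].
split=> [_ _ [t [Ct ->]] [t' [Ct' ->]] | c _ [t [Ct ->]]].
  exists (fun i => t i + t' i); split=> [i|]; first exact: idealD.
  by rewrite -big_split; apply: eq_bigr => i _; rewrite mulrDl.
exists (fun i => c * t i); split=> [i|]; first exact: idealMl.
by rewrite mulr_sumr; apply: eq_bigr => i _; rewrite mulrA.
Qed.

Lemma noetherian_fg (P : T -> Prop) : noetherian T -> is_ideal P ->
  exists r (g : nat -> T), (forall i, P (g i)) /\ forall x, P x -> span (fun=> True) g r x.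
Proof.
move=> noethT Pid.
have /choice[pick pickP] : forall gr : (nat -> T) * nat, exists x,
    P x /\ (span (fun=> True) gr.1 gr.2 x -> forall y, P y -> span (fun=> True) gr.1 gr.2 y).
  move=> [g r].
  have [spanP | /not_all_ex_not[y]] := classic (forall y, P y -> span (fun=> True) g r y).
    by exists 0; split=> //; apply: ideal0.
  by move=> /(imply_to_and (P y)) [Py Ny]; exists y.
pose fix G k : nat -> T :=
  if k is k'.+1 then fun i => if i == k' then pick (G k', k') else G k' i else fun=> 0.
have GP k i : P (G k i).
  elim: k i => [|k IH] i /=; first exact: ideal0.
  by case: (i == k) => //; case: (pickP (G k, k)).
have G_span k x : span (fun=> True) (G k) k x -> span (fun=> True) (G k.+1) k.+1 x.
  move=> [t [_ ->]]; exists (fun i => if i == k then 0 else t i); split=> //.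
  rewrite big_ord_recr /= eqxx mul0r addr0; apply: eq_bigr => i _.
  by rewrite (ltn_eqF (ltn_ord i)).
have span_True k : is_ideal (span (fun=> True) (G k) k) by apply: span_ideal; split.
have [N HN] := noethT _ span_True G_span.
exists N, (G N); split=> //; apply: (pickP (G N, N)).2.
apply: (HN N.+1 (leqnSn N)); exists (fun i => (i == N)%:R); split=> //.
rewrite big_ord_recr /= !eqxx mul1r big1 ?add0r // => i _.
by rewrite (ltn_eqF (ltn_ord i)) mul0r.
Qed.

Variable S : T -> Prop.

Lemma span_idpow_addn n r (g : nat -> T) :
  (forall x, idpow S n x -> span (fun=> True) g r x) ->
  forall m x, idpow S (m + n) x -> span (idpow S m) g r x.
Proof.
move=> gen_g; elim=> [|m IH] x; first by move/gen_g.
apply: gen_ideal_min; first by apply/span_ideal/idpow_ideal.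
move=> _ [u [v [Su [Sv ->]]]]; have [t [St ->]] := IH u Su.
exists (fun i => t i * v); split=> [i|]; first exact: idpow_mul.
by rewrite mulr_suml; apply: eq_bigr => i _; rewrite mulrAC.
Qed.

Lemma compat_span_coef n r (g : nat -> T) (e : nat -> T) :
  (forall x, idpow S n x -> span (fun=> True) g r x) ->
  idpow S n (e 0%N) -> (forall m, idpow S (m + n) (e m.+1 - e m)) ->
  exists c : nat -> nat -> T,
    (forall i, compat S (c i)) /\ forall m, e m = \sum_(i < r) c i m * g i.
Proof.
move=> gen_g Se0 Se.
pose de k := if k is k'.+1 then e k - e k' else e 0%N.
have /choice[t tP] : forall k, exists t : nat -> T,
    (forall i, idpow S k.-1 (t i)) /\ de k = \sum_(i < r) t i * g i.
  case=> [|k]; last exact: (span_idpow_addn gen_g (Se k)).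
  by have [t [_ E]] := gen_g _ Se0; exists t.
have t0 : e 0%N = \sum_(i < r) t 0%N i * g i := (tP 0%N).2.
have tS m : e m.+1 - e m = \sum_(i < r) t m.+1 i * g i := (tP m.+1).2.
exists (fun i m => \sum_(k < m.+1) t k i); split=> [i m | ].
  by rewrite /= big_ord_recr /= addrC addrK; apply: (tP m.+1).1.
elim=> [|m IH]; first by rewrite t0; apply: eq_bigr => i _; rewrite big_ord1.
rewrite -(subrK (e m) (e m.+1)) tS IH -big_split.
by apply: eq_bigr => i _; rewrite [in RHS]big_ord_recr /= mulrDl addrC.
Qed.

End Noetherian.

Definition completion_coords (A Ahat : comPzRingType) (a : A -> Prop)
    (tau : {rmorphism A -> Ahat}) (phi : Ahat -> nat -> A) : Prop :=
  (forall y, compat a (phi y)) /\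
  (forall y y', lim_eq a (phi (y + y')) (fun n => phi y n + phi y' n)) /\
  (forall y y', lim_eq a (phi (y * y')) (fun n => phi y n * phi y' n)) /\
  lim_eq a (phi 1) (fun _ => 1) /\
  (forall y y', lim_eq a (phi y) (phi y') -> y = y') /\
  (forall c, compat a c -> exists y, lim_eq a (phi y) c) /\
  (forall x, lim_eq a (phi (tau x)) (fun _ => x)).

Section Completion.
Variables (A Ahat : comPzRingType) (a : A -> Prop) (tau : {rmorphism A -> Ahat}).
Variable phi : Ahat -> nat -> A.
Hypothesis phiP : completion_coords a tau phi.

Local Notation ahat := (gen_ideal (fun z => exists x, a x /\ z = tau x)).
Local Notation quot_a n := (quot (idpow_ideal a n)).

Let phi_compat y : compat a (phi y). Proof. by case: phiP. Qed.
Let phiD y y' n : idpow a n (phi (y + y') n - (phi y n + phi y' n)).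
Proof. by case: phiP => _ [+ _]; apply. Qed.
Let phiM y y' n : idpow a n (phi (y * y') n - phi y n * phi y' n).
Proof. by case: phiP => _ [_ [+ _]]; apply. Qed.
Let phi1 n : idpow a n (phi 1 n - 1).
Proof. by case: phiP => _ [_ [_ [+ _]]]; apply. Qed.

Definition trunc n : {rmorphism Ahat -> quot_a n} :=
  quot_lift (idpow_ideal a n) (fun y y' => phiD y y' n) (phi1 n)
    (fun y y' => phiM y y' n).

Lemma truncE n y : trunc n y = mk _ (phi y n).
Proof. by []. Qed.

Lemma trunc_tau n x : trunc n (tau x) = mk _ x.
Proof. by rewrite truncE; apply/eq_mk; case: phiP => _ [_ [_ [_ [_ [_]]]]]; apply. Qed.

Lemma trunc_inj y y' : (forall n, trunc n y = trunc n y') -> y = y'.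
Proof.
by move=> yy'; case: phiP => _ [_ [_ [_ [+ _]]]]; apply=> n; have /eq_mk := yy' n.
Qed.

Lemma trunc_compat c : compat a c -> exists y, forall n, trunc n y = mk _ (c n).
Proof.
case: phiP => _ [_ [_ [_ [_ [+ _]]]]] => /[apply] -[y phi_y_c].
by exists y => n; rewrite truncE; apply/eq_mk.
Qed.

Lemma trunc_ahat n y : is_ideal a -> ahat y -> exists w, a w /\ trunc n y = mk _ w.
Proof.
move=> aid; apply: (gen_ideal_min (P := fun y => exists w, a w /\ trunc n y = mk _ w)).
  exact: (preim_ideal (trunc n) (image_ideal (@mk_surj _ _ _) aid)).
by move=> _ [x [ax ->]]; exists x; rewrite trunc_tau.
Qed.

Lemma trunc_eq0 n y : noetherian A -> trunc n y = 0 -> idpow ahat n y.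
Proof.
move=> noethA /mk_eq0 yn.
have [r [g [ag gen_g]]] := noetherian_fg noethA (idpow_ideal a n).
have [c [c_compat c_sum]] :=
  compat_span_coef (e := fun m => phi y (m + n)%N) gen_g yn (fun m => phi_compat y (m + n)).
have /choice[s sP] i : exists s, forall m, trunc m s = mk _ (c i m) by apply: trunc_compat.
suff -> : y = \sum_(i < r) s i * tau (g i).
  apply: ideal_sum => [|i _]; first exact: idpow_ideal.
  apply: idealMl; first exact: idpow_ideal.
  by apply: idpow_rmorph (ag i) => x ax; apply: gen_ideal_sub; exists x.
apply: trunc_inj => m; rewrite rmorph_sum.
under eq_bigr do rewrite rmorphM sP trunc_tau -rmorphM.
rewrite -rmorph_sum -c_sum truncE; apply: esym; apply/eq_mk.
exact: compat_idpow_addn.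
Qed.

Section Levels.
Variables (k AA AhAh : comPzRingType) (iota : k -> A).
Variables (j1 j2 : {rmorphism A -> AA}) (k1 k2 : {rmorphism Ahat -> AhAh}).
Variable h : {rmorphism AA -> AhAh}.
Hypotheses (ida : is_ideal a) (tensAA : is_tensor_alg iota iota j1 j2).
Hypothesis tensAhAh : is_tensor_alg (fun r => tau (iota r)) (fun r => tau (iota r)) k1 k2.
Hypotheses (h1 : forall x, h (j1 x) = k1 (tau x)) (h2 : forall x, h (j2 x) = k2 (tau x)).

Local Notation I := (gen_ideal (fun z => exists x, a x /\ (z = j1 x \/ z = j2 x))).
Local Notation J := (gen_ideal (fun z => exists y, ahat y /\ (z = k1 y \/ z = k2 y))).

Variable n : nat.

Let j1_idpow : forall x, idpow a n x -> idpow I n (j1 x).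
Proof. by apply: idpow_rmorph => x ax; apply: gen_ideal_sub; exists x; split=> //; left. Qed.
Let j2_idpow : forall x, idpow a n x -> idpow I n (j2 x).
Proof. by apply: idpow_rmorph => x ax; apply: gen_ideal_sub; exists x; split=> //; right. Qed.
Let k1_idpow : forall y, idpow ahat n y -> idpow J n (k1 y).
Proof. by apply: idpow_rmorph => y ay; apply: gen_ideal_sub; exists y; split=> //; left. Qed.
Let k2_idpow : forall y, idpow ahat n y -> idpow J n (k2 y).
Proof. by apply: idpow_rmorph => y ay; apply: gen_ideal_sub; exists y; split=> //; right. Qed.
Let h_idpow : forall x, idpow I n x -> idpow J n (h x).
Proof.
apply: idpow_rmorph; apply: (gen_ideal_min (P := fun x => J (h x))).
  exact/preim_ideal/gen_ideal_ideal.
have tau_ahat x : a x -> ahat (tau x) by move=> ax; apply: gen_ideal_sub; exists x.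
move=> _ [x [ax [->|->]]]; rewrite ?h1 ?h2; apply: gen_ideal_sub; exists (tau x).
  by split; [apply: tau_ahat | left].
by split; [apply: tau_ahat | right].
Qed.

Local Notation jbar1 := (quot_map (idpow_ideal a n) (idpow_ideal I n) j1_idpow).
Local Notation jbar2 := (quot_map (idpow_ideal a n) (idpow_ideal I n) j2_idpow).
Local Notation hbar := (quot_map (idpow_ideal I n) (idpow_ideal J n) h_idpow).

Section Inverse.
Variable G : {rmorphism AhAh -> quot (idpow_ideal I n)}.
Hypotheses (G1 : forall y, G (k1 y) = jbar1 (trunc n y))
  (G2 : forall y, G (k2 y) = jbar2 (trunc n y)).

Lemma inverse_hK x : G (h x) = mk _ x.
Proof.
apply: (tensor_alg_ext (u := G \o h) (v := mk _) tensAA) => y /=.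
  by rewrite h1 G1 trunc_tau quot_mapE.
by rewrite h2 G2 trunc_tau quot_mapE.
Qed.

Lemma inverse_idpow_J z : idpow J n z -> G z = 0.
Proof.
have G_J : forall z, J z -> exists w, I w /\ G z = mk (idpow_ideal I n) w.
  apply: gen_ideal_min.
    exact: (preim_ideal G (image_ideal (@mk_surj _ _ _) (gen_ideal_ideal _))).
  move=> _ [y [ay [->|->]]]; have [w [aw yw]] := trunc_ahat n ida ay.
    exists (j1 w); rewrite G1 yw quot_mapE; split=> //.
    by apply: gen_ideal_sub; exists w; split=> //; left.
  exists (j2 w); rewrite G2 yw quot_mapE; split=> //.
  by apply: gen_ideal_sub; exists w; split=> //; right.
move=> /(idpow_image (@mk_surj _ _ _) G_J) [w [Iw ->]]; exact/mk_eq0.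
Qed.

Hypothesis noethA : noetherian A.

Lemma hbar_inverseK z : hbar (G z) = mk _ z.
Proof.
have trunc_val y : trunc n (tau (val (trunc n y)) - y) = 0.
  by rewrite rmorphB trunc_tau mkK subrr.
have hbar_G1 y : hbar (G (k1 y)) = mk _ (k1 y).
  rewrite G1 -[trunc n y]mkK (quot_mapE _ _ j1_idpow) (quot_mapE _ _ h_idpow) h1.
  by apply/eq_mk; rewrite -rmorphB; apply/k1_idpow/(trunc_eq0 noethA)/trunc_val.
have hbar_G2 y : hbar (G (k2 y)) = mk _ (k2 y).
  rewrite G2 -[trunc n y]mkK (quot_mapE _ _ j2_idpow) (quot_mapE _ _ h_idpow) h2.
  by apply/eq_mk; rewrite -rmorphB; apply/k2_idpow/(trunc_eq0 noethA)/trunc_val.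
exact: (tensor_alg_ext (u := hbar \o G) (v := mk _) tensAhAh hbar_G1 hbar_G2).
Qed.

End Inverse.

Lemma exists_inverse : exists G : {rmorphism AhAh -> quot (idpow_ideal I n)},
  (forall y, G (k1 y) = jbar1 (trunc n y)) /\ (forall y, G (k2 y) = jbar2 (trunc n y)).
Proof.
have jbar12 r : jbar1 (trunc n (tau (iota r))) = jbar2 (trunc n (tau (iota r))).
  by rewrite trunc_tau !quot_mapE tensAA.1.
have [G [G1 [G2 _]]] := tensAhAh.2 _ (jbar1 \o trunc n) (jbar2 \o trunc n) jbar12.
by exists G.
Qed.

Lemma h_idpow_reflect x : idpow J n (h x) -> idpow I n x.
Proof.
have [G [G1 G2]] := exists_inverse.
by move/(inverse_idpow_J G1 G2); rewrite (inverse_hK G1 G2) => /mk_eq0.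
Qed.

Lemma h_idpow_approx z : noetherian A -> exists x, idpow J n (z - h x).
Proof.
move=> noethA; have [G [G1 G2]] := exists_inverse.
exists (val (G z)); apply/(eq_mk (idpow_ideal J n)).
by rewrite -(quot_mapE (idpow_ideal I n) _ h_idpow) mkK (hbar_inverseK G1 G2 noethA).
Qed.

End Levels.
End Completion.

Lemma lambda_iso_levelwise (T T' : comPzRingType) (I : T -> Prop) (J : T' -> Prop)
    (h : {rmorphism T -> T'}) :
  (forall n x, idpow J n (h x) -> idpow I n x) ->
  (forall n z, exists x, idpow J n (z - h x)) ->
  lambda_iso I J h.
Proof.
move=> h_reflect h_approx; split=> [c d _ _ hcd n | e e_compat].
  by apply: h_reflect; rewrite rmorphB; apply: hcd.
have /choice[x xP] : forall n, exists x, idpow J n (e n - h x) by move=> n; apply: h_approx.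
exists x; split=> n; last exact/(ideal_congC (idpow_ideal J n))/xP.
apply: h_reflect; rewrite rmorphB; apply: (ideal_congT (idpow_ideal J n) (y := e n.+1)).
  by apply/(ideal_congC (idpow_ideal J n))/idpowS_sub/xP.
by apply: (ideal_congT (idpow_ideal J n) (e_compat n)); apply: xP.
Qed.

Theorem lemma4p6
  (k A : comPzRingType) (iota : {rmorphism k -> A})
  (flatA : flat iota) (noethA : noetherian A)
  (a : A -> Prop) (ida : is_ideal a)
  (AA : comPzRingType) (j1 j2 : {rmorphism A -> AA})
  (tensAA : is_tensor_alg iota iota j1 j2)
  (Ahat : comPzRingType) (tau : {rmorphism A -> Ahat})
  (complA : is_completion a tau)
  (AhAh : comPzRingType) (k1 k2 : {rmorphism Ahat -> AhAh})
  (tensAhAh : is_tensor_alg (fun r => tau (iota r)) (fun r => tau (iota r)) k1 k2)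
  (h : {rmorphism AA -> AhAh})
  (h1 : forall x, h (j1 x) = k1 (tau x)) (h2 : forall x, h (j2 x) = k2 (tau x)) :
  let I := gen_ideal (fun z => exists x, a x /\ (z = j1 x \/ z = j2 x)) in
  let ahat := gen_ideal (fun z => exists x, a x /\ z = tau x) in
  let J := gen_ideal (fun z => exists y, ahat y /\ (z = k1 y \/ z = k2 y)) in
  lambda_iso I J h.
Proof.
move=> I ahat J; have [phi phiP] := complA.
apply: lambda_iso_levelwise => n.
  exact: (h_idpow_reflect phiP ida tensAA tensAhAh h1 h2).
exact: (h_idpow_approx phiP tensAA tensAhAh h1 h2 n ^~ noethA).
Qed.
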